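(* Let $A,B$ be nonempty persistence diagrams, $\Theta(c)=d_\infty(cA,B)$, and let $a^{(m)}=(a^{(m)}_x,a^{(m)}_y)$ be a point of $\chi(A)$ with the largest $y$-coordinate among points of $\chi(A)$. If $$c\ge \max\Big\{\frac{2\,\mathrm{bd}(B)}{a^{(m)}_x+a^{(m)}_y},\ \frac{\mathrm{pers}(B)}{\mathrm{pers}(A)}\Big\},$$ then $\Theta(c)=c\cdot\mathrm{pers}(A)$.
   Context: A persistence diagram is a finite multiset of points $a=(a_x,a_y)$ with $0\le a_x<a_y<\infty$ together with the diagonal $\Delta$ of infinite multiplicity; nonempty means it has at least one such point. $d_\infty$ is the bottleneck distance (infimum over multi-bijections between $A\cup\Delta$ and $B\cup\Delta$ of the maximal $\ell^\infty$ distance; matching $a$ to $\Delta$ costs $\mathrm{pers}(a)$). $cA=\{(ca_x,ca_y)\}$ for $c>0$. $\mathrm{pers}(a)=(a_y-a_x)/2$; $\mathrm{pers}(A)=\max_{a\in A}\mathrm{pers}(a)$; $\chi(A)$ is the multiset of points of $A$ with persistence equal to $\mathrm{pers}(A)$; $\mathrm{bd}(A)=\max_{a\in A}a_y$. *)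

From HB Require Import structures.
From mathcomp Require Import all_boot all_order all_algebra.
From mathcomp Require Import classical_sets reals.
Set Implicit Arguments. Unset Strict Implicit. Unset Printing Implicit Defensive.
Import Order.TTheory GRing.Theory Num.Theory.
Local Open Scope ring_scope.
Local Open Scope classical_set_scope.

Section PD.
Variable R : realType.

(* A persistence diagram: finite multiset (list) of off-diagonal points
   (a_x, a_y) with 0 <= a_x < a_y. The diagonal is implicit. *)
Definition is_diagram (A : seq (R * R)) : bool :=
  all (fun a => (0 <= a.1) && (a.1 < a.2)) A.

Definition pers (a : R * R) : R := (a.2 - a.1) / 2.

(* pers(A) = max persistence (A nonempty, all persistences > 0). *)
Definition persD (A : seq (R * R)) : R := \big[Num.max/0]_(a <- A) pers a.

Definition bd (A : seq (R * R)) : R := \big[Num.max/0]_(a <- A) a.2.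

Definition scaleD (c : R) (A : seq (R * R)) : seq (R * R) :=
  map (fun a => (c * a.1, c * a.2)) A.

Definition linf (a b : R * R) : R := Num.max `|a.1 - b.1| `|a.2 - b.2|.

(* A multi-bijection between A u Delta and B u Delta, up to the diagonal-to-
   diagonal part (cost 0), is a partial matching: an injective partial map
   from the points of A to the points of B; unmatched points are sent to
   the diagonal at cost pers. *)
Definition pmatching (A B : seq (R * R)) := {ffun 'I_(size A) -> option 'I_(size B)}.

Definition is_partial_bij A B (f : pmatching A B) : Prop :=
  forall i i' j, f i = Some j -> f i' = Some j -> i = i'.

Definition matching_cost A B (f : pmatching A B) : R :=
  Num.max
    (\big[Num.max/0]_(i < size A)
        match f i with
        | Some j => linf (nth (0,0) A i) (nth (0,0) B j)
        | None => pers (nth (0,0) A i)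
        end)
    (\big[Num.max/0]_(j < size B | [forall i, f i != Some j])
        pers (nth (0,0) B j)).

Definition bottleneck (A B : seq (R * R)) : R :=
  inf [set r | exists f : pmatching A B, is_partial_bij f /\ r = matching_cost f].

End PD.

From HB Require Import structures.
From mathcomp Require Import all_boot all_order all_algebra.
From mathcomp Require Import classical_sets reals.
From mathcomp Require Import ring lra.
Set Implicit Arguments. Unset Strict Implicit. Unset Printing Implicit Defensive.
Import Order.TTheory GRing.Theory Num.Theory.
Local Open Scope ring_scope.

(* Theorem 7: once c is large, the bottleneck distance d(cA, B) equals
   c * pers(A), i.e. the optimal matching sends everything to the diagonal.
   - Upper bound: the empty matching (every point to the diagonal) costs
     max(pers(cA), pers(B)) = max(c pers(A), pers(B)), which is c pers(A)
     as soon as c >= pers(B)/pers(A).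
   - Lower bound: for the point a = c a^(m) of cA, the condition
     c >= 2 bd(B)/(a^(m)_x + a^(m)_y) says every point b of B lies at height
     b_y <= (a_x + a_y)/2, so matching a to b costs at least
     a_y - b_y >= pers(a); sending a to the diagonal costs pers(a) as well.
     Hence every matching costs at least pers(a) = c pers(A).
   - An infimum that is attained and is a lower bound equals that value.  The argument only uses that
   a^(m) is a point of chi(A) with a^(m)_x >= 0: the maximality of its
   y-coordinate and the diagram conditions on B are not needed. *)

Section Bottleneck.
Context {R : realType}.
Implicit Types (A B : seq (R * R)) (a b : R * R).

Lemma persD_ub A a : a \in A -> pers a <= persD A.
Proof. by move=> aA; exact: (le_bigmax_seq _ _ _ _ aA). Qed.

Lemma bd_ub A a : a \in A -> a.2 <= bd A.
Proof. by move=> aA; exact: (le_bigmax_seq _ _ _ _ aA). Qed.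

Lemma persD_ge0 A : 0 <= persD A.
Proof. by apply: bigmax_ge_id. Qed.

Lemma pers_scale c a : pers (c * a.1, c * a.2) = c * pers a.
Proof. by rewrite /pers /=; field. Qed.

Lemma persD_scaleD c A : 0 <= c -> persD (scaleD c A) = c * persD A.
Proof.
move=> c0; rewrite /persD big_map; elim: A => [|a A IH].
  by rewrite !big_nil mulr0.
by rewrite !big_cons IH pers_scale maxr_pMr.
Qed.

Lemma mem_scaleD c A a : a \in A -> (c * a.1, c * a.2) \in scaleD c A.
Proof. exact: (map_f (fun a => (c * a.1, c * a.2))). Qed.

Lemma pers_le_linf a b : 2 * b.2 <= a.1 + a.2 -> pers a <= linf a b.
Proof.
move=> hb; rewrite /linf le_max; apply/orP; right.
by apply: le_trans (ler_norm _); rewrite /pers; lra.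
Qed.

Lemma matching_cost_ge_pers A B (f : pmatching A B) a :
  a \in A -> 2 * bd B <= a.1 + a.2 -> pers a <= matching_cost f.
Proof.
move=> aA hbd; have ia : (index a A < size A)%N by rewrite index_mem.
rewrite /matching_cost le_max; apply/orP; left.
apply: le_trans (le_bigmax _ _ (Ordinal ia)) => /=.
rewrite nth_index //; case: (f _) => [j|//].
apply: pers_le_linf; apply: le_trans hbd.
by rewrite ler_pM2l // bd_ub // mem_nth.
Qed.

Definition diag_matching A B : pmatching A B := [ffun => None].

Lemma diag_matching_partial_bij A B : is_partial_bij (diag_matching A B).
Proof. by move=> i i' j; rewrite ffunE. Qed.

Lemma diag_matching_cost_le A B :
  matching_cost (diag_matching A B) <= Num.max (persD A) (persD B).
Proof.
rewrite /matching_cost ge_max; apply/andP; split.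
  apply: bigmax_le; first by rewrite le_max persD_ge0.
  by move=> i _; rewrite ffunE le_max (@persD_ub A) // mem_nth.
apply: bigmax_le; first by rewrite le_max persD_ge0.
by move=> j _; rewrite le_max (@persD_ub B) ?orbT // mem_nth.
Qed.

Lemma bottleneck_attained A B (f : pmatching A B) v :
  is_partial_bij f -> matching_cost f <= v ->
  (forall g : pmatching A B, v <= matching_cost g) ->
  bottleneck A B = v.
Proof.
move=> fbij fv vlb.
set E := [set r | exists g : pmatching A B, is_partial_bij g /\ r = matching_cost g]%classic.
have Elb : lbound E v by move=> r [g [_ ->]].
have Ef : E (matching_cost f) by exists f.
apply/eqP; rewrite eq_le; apply/andP; split.
  by apply: le_trans fv; apply: ge_inf => //; exists v.
by apply: lb_le_inf => //; exists (matching_cost f).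
Qed.

End Bottleneck.

Theorem mainTheorem7 (R : realType) (A B : seq (R * R)) (am : R * R) (c : R) :
  is_diagram A -> is_diagram B -> A != [::] -> B != [::] ->
  (* am is a point of chi(A) with the largest y-coordinate among chi(A) *)
  am \in A -> pers am = persD A ->
  (forall b, b \in A -> pers b = persD A -> b.2 <= am.2) ->
  0 < c ->
  Num.max (2 * bd B / (am.1 + am.2)) (persD B / persD A) <= c ->
  bottleneck (scaleD c A) B = c * persD A.
Proof.
move=> dA _ _ _ amA Pam _ c0; rewrite ge_max => /andP[hbd hpers].
have [am1 am12] : 0 <= am.1 /\ am.1 < am.2 by move/allP: dA => /(_ _ amA) /andP.
have PA0 : 0 < persD A by rewrite -Pam /pers; lra.
have am0 : 0 < am.1 + am.2 by lra.
rewrite ler_pdivrMr // in hbd.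
rewrite ler_pdivrMr // in hpers.
apply: (@bottleneck_attained _ _ _ (diag_matching _ _)).
- exact: diag_matching_partial_bij.
- apply: le_trans (diag_matching_cost_le _ _) _.
  by rewrite persD_scaleD ?(ltW c0) // ge_max lexx.
- move=> g; rewrite -Pam -pers_scale; apply: matching_cost_ge_pers.
    exact: mem_scaleD.
  rewrite /=; lra.
Qed.
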